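(* Let $2\le n\le m$ be natural numbers and $\triangle\subset\Diamond_m$ an $n$-simplex with $0$ in the relative interior of $\triangle$. Then there is a smooth perturbation $\{g_t\}_{t\in(-1,1)}\subset\operatorname{Hom}(\triangle,\Diamond_m)$ of the identity embedding $g_0:\triangle\to\Diamond_m$ such that $0$ lies in the relative interior of $g_t(\triangle)$ for all $t\in(-1,1)$.
   Context: For convex polytopes $P,Q$, $\operatorname{Hom}(P,Q)$ is the set of maps $P\to Q$ that are restrictions of affine maps $\operatorname{Aff}(P)\to\operatorname{Aff}(Q)$, and $\operatorname{Aff}(P,Q)$ is the real affine space of all affine maps $\operatorname{Aff}(P)\to\operatorname{Aff}(Q)$. A smooth perturbation of $f\in\operatorname{Hom}(P,Q)$ is a family $\{f_t\}_{t\in(-1,1)}\subset\operatorname{Hom}(P,Q)$ with $f_0=f$ such that the map $\psi:(-1,1)\to\operatorname{Aff}(P,Q)$ determined by $\psi(t)|_P=f_t$ is injective and smooth. $\Diamond_m=\operatorname{conv}(\pm e_1,\ldots,\pm e_m)\subset\mathbb{R}^m$. *)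

From HB Require Import structures.
From mathcomp Require Import all_boot all_order all_algebra.
From mathcomp Require Import all_classical all_reals all_analysis.
Set Implicit Arguments. Unset Strict Implicit. Unset Printing Implicit Defensive.
Import Order.TTheory GRing.Theory Num.Theory.
Local Open Scope classical_set_scope.
Local Open Scope ring_scope.

Section Defs.
Variable R : realType.

Definition conv m (S : set 'rV[R]_m) : set 'rV[R]_m :=
  [set x | exists (k : nat) (l : 'I_k -> R) (p : 'I_k -> 'rV[R]_m),
     (forall i, 0 <= l i) /\ \sum_(i < k) l i = 1 /\ (forall i, S (p i)) /\
     x = \sum_(i < k) l i *: p i].

Definition affhull m (S : set 'rV[R]_m) : set 'rV[R]_m :=
  [set x | exists (k : nat) (l : 'I_k -> R) (p : 'I_k -> 'rV[R]_m),
     \sum_(i < k) l i = 1 /\ (forall i, S (p i)) /\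
     x = \sum_(i < k) l i *: p i].

Definition relint m (S : set 'rV[R]_m) : set 'rV[R]_m :=
  [set x | S x /\ exists e : R, 0 < e /\
     (forall y : 'rV[R]_m, (forall j, `|y 0 j - x 0 j| < e) -> affhull S y -> S y)].

Definition stdbasis m (i : 'I_m) : 'rV[R]_m := delta_mx 0 i.

Definition crosspolytope m : set 'rV[R]_m :=
  conv [set x | exists i : 'I_m, x = stdbasis i \/ x = - stdbasis i].

Definition aff_indep m n (v : 'I_n.+1 -> 'rV[R]_m) : Prop :=
  forall l : 'I_n.+1 -> R, \sum_(i < n.+1) l i = 0 ->
    \sum_(i < n.+1) l i *: v i = 0 -> forall i, l i = 0.

Definition is_simplex m n (T : set 'rV[R]_m) : Prop :=
  exists v : 'I_n.+1 -> 'rV[R]_m, aff_indep v /\ T = conv (range v).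

Definition in_m11 (t : R) : Prop := -1 < t /\ t < 1.

Definition smooth_m11 (f : R -> R) : Prop :=
  forall (k : nat) (t : R), in_m11 t -> derivable (derive1n k f) t 1.

Definition affmap m (A : 'M[R]_m) (b : 'rV[R]_m) (x : 'rV[R]_m) : 'rV[R]_m :=
  x *m A + b.

End Defs.
Arguments crosspolytope {R} m.

From Pilot Require Import Defs.
From HB Require Import structures.
From mathcomp Require Import all_boot all_order all_algebra.
From mathcomp Require Import all_classical all_reals all_analysis.
From mathcomp Require Import lra ring.
Set Implicit Arguments.
Unset Strict Implicit.
Unset Printing Implicit Defensive.
Import Order.TTheory GRing.Theory Num.Theory.
Local Open Scope classical_set_scope.
Local Open Scope ring_scope.

(* Since 0 is a relative interior point and the simplex is not {0}, it contains
   a short segment [-w, w] around 0.  Take g_t(x) = a(t) x + b(t) w with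
   a(t) = 1 - t^2/2 and b(t) = t^3/2 = (1 - a(t)) t.  Then g_t(x) is a convex
   combination of x and t w, both in the simplex, hence in Diamond_m; g_0 is the
   identity; t |-> g_t(0) = b(t) w is injective; and g_t is a positive homothety
   followed by a small translation, which maps the relative interior point
   -(b(t)/a(t)) w of the simplex to 0. *)

Section Hulls.
Variables (R : realType) (m : nat).
Implicit Types (S T : set 'rV[R]_m).

Lemma sub_conv S : S `<=` Defs.conv S.
Proof.
move=> x Sx; exists 1%N, (fun=> 1), (fun=> x).
by rewrite !big_ord1 scale1r.
Qed.

Lemma conv_convex S x y (c : R) :
  Defs.conv S x -> Defs.conv S y -> 0 <= c <= 1 -> Defs.conv S (c *: x + (1 - c) *: y).
Proof.
move=> [k1 [l1 [p1 [l1_ge0 [l1_sum [p1S ->]]]]]].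
move=> [k2 [l2 [p2 [l2_ge0 [l2_sum [p2S ->]]]]]] /andP[c_ge0 c_le1].
have splitl (i : 'I_k1) : fintype.split (lshift k2 i) = inl i := unsplitK (inl i).
have splitr (i : 'I_k2) : fintype.split (rshift k1 i) = inr i := unsplitK (inr i).
exists (k1 + k2)%N,
  (fun i => match fintype.split i with inl i => c * l1 i | inr i => (1 - c) * l2 i end),
  (fun i => match fintype.split i with inl i => p1 i | inr i => p2 i end).
split; [|split; [|split]].
- by move=> i; case: fintype.split => j; rewrite mulr_ge0 ?subr_ge0.
- rewrite big_split_ord /=; under eq_bigr do rewrite splitl.
  under [X in _ + X]eq_bigr do rewrite splitr.
  by rewrite -!mulr_sumr l1_sum l2_sum !mulr1 addrC subrK.
- by move=> i; case: fintype.split.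
- rewrite big_split_ord /=; under [X in _ = X + _]eq_bigr do rewrite splitl.
  under [X in _ = _ + X]eq_bigr do rewrite splitr.
  by rewrite !scaler_sumr; congr (_ + _); apply: eq_bigr => i _; rewrite scalerA.
Qed.

Lemma affhull_line T p q (mu : R) :
  T p -> T q -> affhull T (mu *: p + (1 - mu) *: q).
Proof.
move=> Tp Tq; exists 2%N, (fun i : 'I_2 => if i == ord0 then mu else 1 - mu),
  (fun i : 'I_2 => if i == ord0 then p else q).
split; [|split].
- by rewrite !big_ord_recl big_ord0 /= addr0 addrC subrK.
- by move=> i; case: (i == ord0).
- by rewrite !big_ord_recl big_ord0 /= addr0.
Qed.

Lemma affhull_image T (a : R) (c : 'rV[R]_m) y :
  affhull ((fun x => a *: x + c) @` T) y -> exists2 z, affhull T z & y = a *: z + c.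
Proof.
move=> [k [l [p [l_sum [pT ->]]]]].
have /choice[f fP] : forall i, exists x, T x /\ a *: x + c = p i.
  by move=> i; case: (pT i) => x Tx <-; exists x.
exists (\sum_i l i *: f i); first by exists k, l, f; split=> //; split=> // i; case: (fP i).
under eq_bigr => i _ do rewrite -(proj2 (fP i)) scalerDr scalerA mulrC -scalerA.
by rewrite big_split /= -scaler_sumr -scaler_suml l_sum scale1r.
Qed.

Lemma relint_open T x : relint T x ->
  exists2 e : R, 0 < e &
    forall y, T y -> (forall j, `|y 0 j - x 0 j| < e) -> relint T y.
Proof.
move=> [_ [e [e_gt0 He]]]; exists (e / 2) => [|y Ty yx]; first lra.
split=> //; exists (e / 2); split=> [|z zy]; first lra.
apply: He => j; have := yx j; have := zy j.
have := ler_normD (z 0 j - y 0 j) (y 0 j - x 0 j); rewrite addrA subrK; lra.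
Qed.

Lemma relint_scale_translate T (a : R) c x : 0 < a -> relint T x ->
  relint ((fun y => a *: y + c) @` T) (a *: x + c).
Proof.
move=> a_gt0 [Tx [e [e_gt0 He]]]; split; first by exists x.
exists (a * e); split=> [|y ya /affhull_image[z Tz yE]]; first exact: mulr_gt0.
exists z => //; apply: He Tz => j; have := ya j.
rewrite yE !mxE [a * x 0 j + _]addrC addrKA -mulrBr normrM (gtr0_norm a_gt0).
by rewrite ltr_pM2l.
Qed.

Lemma small_multiple (u : 'rV[R]_m) (d : R) :
  0 < d -> exists2 lam : R, 0 < lam & forall j, `|(lam *: u) 0 j| < d.
Proof.
move=> d_gt0; pose M := \sum_k `|u 0 k|.
have M_ge0 : 0 <= M by apply: sumr_ge0 => k _.
exists (d / (M + 1)) => [|j]; first by rewrite divr_gt0 // ltr_wpDl.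
have uj_le : `|u 0 j| <= M by rewrite /M (bigD1 j) //= lerDl sumr_ge0.
rewrite mxE normrM gtr0_norm ?divr_gt0 ?ltr_wpDl // mulrAC ltr_pdivrMr ?ltr_wpDl //.
by rewrite ltr_pM2l // ltr_pwDr.
Qed.

Lemma relint0_segment T u (d : R) : relint T 0 -> T u -> u != 0 -> 0 < d ->
  exists w : 'rV[R]_m, [/\ w != 0, forall j, `|w 0 j| < d & forall s, `|s| <= 1 -> T (s *: w)].
Proof.
move=> [T0 [e [e_gt0 He]]] Tu u0 d_gt0.
have [lam lam_gt0 small] : exists2 lam : R, 0 < lam & forall j, `|(lam *: u) 0 j| < Num.min d e.
  by apply: small_multiple; rewrite lt_min d_gt0 e_gt0.
exists (lam *: u); split.
- by rewrite scaler_eq0 negb_or u0 gt_eqF.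
- by move=> j; have := small j; rewrite lt_min => /andP[].
move=> s s_le1; apply: He => [j|].
  have := small j; rewrite lt_min => /andP[_ lt_e]; rewrite !mxE subr0 normrM.
  by rewrite mxE in lt_e; exact: le_lt_trans (ler_piMl (normr_ge0 _) s_le1) lt_e.
have -> : s *: (lam *: u) = (s * lam) *: u + (1 - s * lam) *: 0.
  by rewrite scaler0 addr0 scalerA.
exact: affhull_line.
Qed.

End Hulls.

Section Simplex.
Variables (R : realType) (m n : nat).

Lemma aff_indep_inj (v : 'I_n.+1 -> 'rV[R]_m) : aff_indep v -> injective v.
Proof.
move=> indep i j vij; apply/eqP/negPn/negP => ij.
pose l k : R := (k == i)%:R - (k == j)%:R.
have sum_delta1 h : \sum_k ((k == h)%:R : R) = 1.
  by rewrite (bigD1 h) //= eqxx big1 ?addr0 // => k /negbTE->.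
have sum_delta h : \sum_k (k == h)%:R *: v k = v h.
  by rewrite (bigD1 h) //= eqxx scale1r big1 ?addr0 // => k /negbTE->; rewrite scale0r.
have l_sum : \sum_k l k = 0 by rewrite sumrB !sum_delta1 subrr.
have l_comb : \sum_k l k *: v k = 0.
  by under eq_bigr do rewrite scalerBl; rewrite sumrB !sum_delta vij subrr.
have := indep l l_sum l_comb i; rewrite /l eqxx (negbTE ij) subr0.
by move/eqP; rewrite oner_eq0.
Qed.

Lemma simplex_nonzero (T : set 'rV[R]_m) :
  (0 < n)%N -> is_simplex n T -> exists2 u, T u & u != 0.
Proof.
move=> n_gt0 [v [indep ->]].
have vT i : Defs.conv (range v) (v i) by apply: sub_conv; exists i.
have [v0|] := eqVneq (v ord0) 0; last by exists (v ord0).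
exists (v (inord 1)) => //; apply/eqP => v1; rewrite -v1 in v0.
by have /(congr1 val) := aff_indep_inj indep v0; rewrite /= inordK.
Qed.

End Simplex.

Section Perturbation.
Variables (R : realType) (m : nat) (T : set 'rV[R]_m) (w : 'rV[R]_m).

Definition pscale (t : R) : R := 1 - t ^+ 2 / 2.
Definition pshift (t : R) : R := t ^+ 3 / 2.
Definition pert (t : R) (x : 'rV[R]_m) : 'rV[R]_m := pscale t *: x + pshift t *: w.

Lemma pscale_gt_half t : in_m11 t -> 1 / 2 < pscale t.
Proof. by move=> [t_gtN1 t_lt1]; rewrite /pscale; nra. Qed.

Lemma normr_pshift_lt t : in_m11 t -> `|pshift t| < 1 / 2.
Proof.
move=> [t_gtN1 t_lt1]; have abs_t_lt1 : `|t| < 1 by rewrite ltr_norml; lra.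
have : `|t| ^+ 3 < 1 by rewrite expr_lt1.
by rewrite /pshift normrM normrX normfV (@ger0_norm _ 2) //; lra.
Qed.

Lemma pert_convex t x : pert t x = pscale t *: x + (1 - pscale t) *: (t *: w).
Proof. by rewrite /pert scalerA /pscale /pshift; congr (_ + _ *: _); ring. Qed.

Hypothesis wT : forall s, `|s| <= 1 -> T (s *: w).

Lemma pert_crosspolytope t x : T `<=` crosspolytope m -> in_m11 t -> T x ->
  crosspolytope m (pert t x).
Proof.
move=> Tsub [t_gtN1 t_lt1] Tx; rewrite pert_convex.
apply: conv_convex; [exact: Tsub | apply/Tsub/wT; rewrite ler_norml; lra |].
by rewrite /pscale; apply/andP; split; nra.
Qed.

Lemma relint_pert (e : R) t :
  (forall y, T y -> (forall j, `|y 0 j - (0 : 'rV[R]_m) 0 j| < e) -> relint T y) ->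
  (forall j, `|w 0 j| < e) -> in_m11 t -> relint (pert t @` T) 0.
Proof.
move=> Hrel we t11.
have a_gt0 : 0 < pscale t by have := pscale_gt_half t11; lra.
pose r := - (pshift t / pscale t).
have r_le1 : `|r| <= 1.
  rewrite normrN normrM normfV (gtr0_norm a_gt0) ler_pdivrMr // mul1r.
  by have := normr_pshift_lt t11; have := pscale_gt_half t11; lra.
have Tr : relint T (r *: w).
  apply: Hrel; first exact: wT.
  move=> j; rewrite !mxE subr0 normrM.
  exact: le_lt_trans (ler_piMl (normr_ge0 _) r_le1) (we j).
have -> : 0 = pscale t *: (r *: w) + pshift t *: w.
  by rewrite scalerA /r mulrN mulrCA divff ?mulr1 ?scaleNr ?addNr // gt_eqF.
exact: relint_scale_translate.
Qed.

End Perturbation.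

Lemma smooth_m11_poly (R : realType) (p : {poly R}) (f : R -> R) :
  f =1 horner p -> smooth_m11 f.
Proof.
move=> /funext-> k t _.
have -> : derive1n k (horner p) = horner p^`(k).
  elim: k => [|k IHk]; first by rewrite derive1n0 derivn0.
  by rewrite derive1nS IHk derivnS derivE.
exact: derivable_horner.
Qed.

Lemma expr3_inj (R : realType) : injective (fun x : R => x ^+ 3).
Proof.
move=> s t /= st; apply/eqP; rewrite -subr_eq0.
have : (s - t) * ((s + t / 2) ^+ 2 + 3 / 4 * t ^+ 2) == 0.
  by apply/eqP; rewrite -[RHS](subrr (t ^+ 3)) -{1}st; field.
rewrite mulf_eq0 => /orP[//|/eqP sq0].
have t0 : t = 0 by have := sqr_ge0 (s + t / 2); have := sqr_ge0 t; nra.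
by move: sq0; rewrite t0; nra.
Qed.

Theorem lemma4p3 (R : realType) (n m : nat) (T : set 'rV[R]_m) :
  (2 <= n)%N -> (n <= m)%N ->
  is_simplex n T -> T `<=` crosspolytope m -> relint T 0 ->
  exists (A : R -> 'M[R]_m) (b : R -> 'rV[R]_m),
    (forall i j, smooth_m11 (fun t => A t i j)) /\
    (forall j, smooth_m11 (fun t => b t 0 j)) /\
    (forall s t, in_m11 s -> in_m11 t ->
       (forall x, T x -> affmap (A s) (b s) x = affmap (A t) (b t) x) -> s = t) /\
    (forall t, in_m11 t -> forall x, T x -> crosspolytope m (affmap (A t) (b t) x)) /\
    (forall x, T x -> affmap (A 0) (b 0) x = x) /\
    (forall t, in_m11 t -> relint (affmap (A t) (b t) @` T) 0).
Proof.
move=> n_ge2 _ simplexT Tsub T0.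
have [u Tu u0] := simplex_nonzero (ltnW n_ge2) simplexT.
have [e e_gt0 Hrel] := relint_open T0.
have [w [w0 we wT]] := relint0_segment T0 Tu u0 e_gt0.
have gE t : affmap (pscale t)%:M (pshift t *: w) = pert w t.
  by apply/funext => x; rewrite /affmap mul_mx_scalar.
exists (fun t => (pscale t)%:M), (fun t => pshift t *: w).
split; [|split; [|split; [|split; [|split]]]].
- move=> i j; apply: (smooth_m11_poly (p := (1 - 'X^2 * (2^-1)%:P) *+ (i == j))) => t.
  by rewrite mxE hornerMn !hornerE.
- move=> j; apply: (smooth_m11_poly (p := 'X^3 * (w 0 j / 2)%:P)) => t.
  by rewrite mxE !hornerE /pshift mulrAC.
- move=> s t _ _ /(_ 0 (proj1 T0)); rewrite !gE /pert !scaler0 !add0r => /eqP.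
  rewrite -subr_eq0 -scalerBl scaler_eq0 (negbTE w0) orbF subr_eq0 /pshift.
  by move=> /eqP st; apply: expr3_inj; lra.
- by move=> t t11 x; rewrite gE; apply: pert_crosspolytope.
- move=> x _; rewrite gE /pert /pscale /pshift.
  by rewrite expr0n mul0r subr0 scale1r expr0n mul0r scale0r addr0.
- by move=> t; rewrite gE; apply: relint_pert Hrel we.
Qed.
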